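(* For each $L\in\{N, NeF, CoPC, MPC\}$, for every finite multiset of formulas $\Gamma$ and every formula $\varphi$: the sequent $\Gamma\Rightarrow\varphi$ is derivable in $\mathbf{G3}L$ if and only if the history sequent $\emptyset\mid\Gamma\Rightarrow\varphi$ is derivable in $\mathbf{G3}L^{Hist}$.
   Context: Formulas are generated from a countable set of propositional variables $p,q,\dots$ and the constant $\top$ by the grammar $\varphi::= p\mid\top\mid\varphi\wedge\varphi\mid\varphi\vee\varphi\mid\varphi\to\varphi\mid\neg\varphi$ (there is no constant $\bot$). Ordinary systems. A sequent is $\Gamma\Rightarrow\varphi$ with $\Gamma$ a finite multiset of formulas and $\varphi$ a formula; $\Gamma,\alpha$ denotes $\Gamma$ with one more occurrence of $\alpha$. Rules: (ax) $\Gamma,p\Rightarrow p$; ($\top$) $\Gamma\Rightarrow\top$; ($\to$r) from $\Gamma,\alpha\Rightarrow\beta$ infer $\Gamma\Rightarrow\alpha\to\beta$; ($\to$l) from $\Gamma,\alpha\to\beta\Rightarrow\alpha$ and $\Gamma,\beta\Rightarrow\varphi$ infer $\Gamma,\alpha\to\beta\Rightarrow\varphi$; ($\wedge$r) from $\Gamma\Rightarrow\alpha$ and $\Gamma\Rightarrow\beta$ infer $\Gamma\Rightarrow\alpha\wedge\beta$; ($\wedge$l) from $\Gamma,\alpha,\beta\Rightarrow\varphi$ infer $\Gamma,\alpha\wedge\beta\Rightarrow\varphi$; ($\vee$r$_1$), ($\vee$r$_2$) from $\Gamma\Rightarrow\alpha$ (resp. $\Gamma\Rightarrow\beta$) infer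 $\Gamma\Rightarrow\alpha\vee\beta$; ($\vee$l) from $\Gamma,\alpha\Rightarrow\varphi$ and $\Gamma,\beta\Rightarrow\varphi$ infer $\Gamma,\alpha\vee\beta\Rightarrow\varphi$; (n) from $\Gamma,\neg\alpha,\beta\Rightarrow\alpha$ and $\Gamma,\neg\alpha,\alpha\Rightarrow\beta$ infer $\Gamma,\neg\alpha\Rightarrow\neg\beta$; (nef) from $\Gamma,\neg\alpha\Rightarrow\alpha$ infer $\Gamma,\neg\alpha\Rightarrow\neg\beta$; (copc) from $\Gamma,\neg\alpha,\beta\Rightarrow\alpha$ infer $\Gamma,\neg\alpha\Rightarrow\neg\beta$; (an) from $\Gamma,\alpha\Rightarrow\neg\alpha$ infer $\Gamma\Rightarrow\neg\alpha$. Positive rules: (ax) through ($\vee$l). $\mathbf{G3N}$ = positive + (n); $\mathbf{G3NeF}$ = positive + (n) + (nef); $\mathbf{G3CoPC}$ = positive + (copc); $\mathbf{G3MPC}$ = positive + (copc) + (an); no weakening, contraction or cut rules. History systems. A history sequent is $\mathcal H\mid\Gamma\Rightarrow\varphi$ where $\mathcal H$ (the history) is a finite set of formulas, $\Gamma$ a finite multiset, $\varphi$ a formula (the goal). $(\psi,\mathcal H)$ denotes $\mathcal H\cup\{\psi\}$, $\emptyset$ is the empty history, ''$\alpha\in\Gamma$'' means $\alpha$ occurs in $\Gamma$. History rules (side conditions after ''if''): (ax) $\mathcal H\mid\Gamma,p\Rightarrow p$; ($\top$) $\mathcal H\mid\Gamma\Rightarrow\top$; ($\to$r$_1$) from $\emptyset\mid\Gamma,\alpha\Rightarrow\beta$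 infer $\mathcal H\mid\Gamma\Rightarrow\alpha\to\beta$, if $\alpha\notin\Gamma$; ($\to$r$_2$) from $\mathcal H\mid\Gamma\Rightarrow\beta$ infer $\mathcal H\mid\Gamma\Rightarrow\alpha\to\beta$, if $\alpha\in\Gamma$; ($\to$l) from $(\varphi,\mathcal H)\mid\Gamma,\alpha\to\beta\Rightarrow\alpha$ and $\emptyset\mid\Gamma,\alpha\to\beta,\beta\Rightarrow\varphi$ infer $\mathcal H\mid\Gamma,\alpha\to\beta\Rightarrow\varphi$, if $\varphi\notin\mathcal H$ and $\beta\notin\Gamma$; ($\wedge$r) from $\mathcal H\mid\Gamma\Rightarrow\alpha$ and $\mathcal H\mid\Gamma\Rightarrow\beta$ infer $\mathcal H\mid\Gamma\Rightarrow\alpha\wedge\beta$; ($\wedge$l$_1$) from $\emptyset\mid\Gamma,\alpha\wedge\beta,\alpha\Rightarrow\varphi$ infer $\mathcal H\mid\Gamma,\alpha\wedge\beta\Rightarrow\varphi$, if $\alpha\notin\Gamma$; ($\wedge$l$_2$) from $\emptyset\mid\Gamma,\alpha\wedge\beta,\beta\Rightarrow\varphi$ infer $\mathcal H\mid\Gamma,\alpha\wedge\beta\Rightarrow\varphi$, if $\beta\notin\Gamma$; ($\vee$r$_1$), ($\vee$r$_2$) from $\mathcal H\mid\Gamma\Rightarrow\alpha$ (resp. $\mathcal H\mid\Gamma\Rightarrow\beta$) infer $\mathcal H\mid\Gamma\Rightarrow\alpha\vee\beta$; ($\vee$l) from $\emptyset\mid\Gamma,\alpha\vee\beta,\alpha\Rightarrow\varphi$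 and $\emptyset\mid\Gamma,\alpha\vee\beta,\beta\Rightarrow\varphi$ infer $\mathcal H\mid\Gamma,\alpha\vee\beta\Rightarrow\varphi$, if $\alpha,\beta\notin\Gamma$; (n$_1$) from $\emptyset\mid\Gamma,\neg\alpha,\beta\Rightarrow\alpha$ and $\emptyset\mid\Gamma,\neg\alpha,\alpha\Rightarrow\beta$ infer $\mathcal H\mid\Gamma,\neg\alpha\Rightarrow\neg\beta$, if $\beta\notin\Gamma\cup\{\neg\alpha\}$ and $\alpha\notin\Gamma$; (n$_2$) from $\emptyset\mid\Gamma,\neg\alpha,\beta\Rightarrow\alpha$ and $\mathcal H\mid\Gamma,\neg\alpha\Rightarrow\beta$ infer $\mathcal H\mid\Gamma,\neg\alpha\Rightarrow\neg\beta$, if $\beta\notin\Gamma\cup\{\neg\alpha\}$ and $\alpha\in\Gamma$; (n$_3$) from $(\neg\beta,\mathcal H)\mid\Gamma,\neg\alpha\Rightarrow\alpha$ and $\emptyset\mid\Gamma,\neg\alpha,\alpha\Rightarrow\beta$ infer $\mathcal H\mid\Gamma,\neg\alpha\Rightarrow\neg\beta$, if $\neg\beta\notin\mathcal H$, $\beta\in\Gamma\cup\{\neg\alpha\}$ and $\alpha\notin\Gamma$; (n$_4$) from $(\neg\beta,\mathcal H)\mid\Gamma,\neg\alpha\Rightarrow\alpha$ and $\mathcal H\mid\Gamma,\neg\alpha\Rightarrow\beta$ infer $\mathcal H\mid\Gamma,\neg\alpha\Rightarrow\neg\beta$, if $\neg\beta\notin\mathcal H$, $\beta\in\Gamma\cup\{\neg\alpha\}$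 and $\alpha\in\Gamma$; (nef) from $(\neg\beta,\mathcal H)\mid\Gamma,\neg\alpha\Rightarrow\alpha$ infer $\mathcal H\mid\Gamma,\neg\alpha\Rightarrow\neg\beta$, if $\neg\beta\notin\mathcal H$; (copc$_1$) from $\emptyset\mid\Gamma,\neg\alpha,\beta\Rightarrow\alpha$ infer $\mathcal H\mid\Gamma,\neg\alpha\Rightarrow\neg\beta$, if $\beta\notin\Gamma\cup\{\neg\alpha\}$; (copc$_2$) from $(\neg\beta,\mathcal H)\mid\Gamma,\neg\alpha\Rightarrow\alpha$ infer $\mathcal H\mid\Gamma,\neg\alpha\Rightarrow\neg\beta$, if $\neg\beta\notin\mathcal H$ and $\beta\in\Gamma\cup\{\neg\alpha\}$; (an) from $\emptyset\mid\Gamma,\alpha\Rightarrow\neg\alpha$ infer $\mathcal H\mid\Gamma\Rightarrow\neg\alpha$, if $\alpha\notin\Gamma$. In addition, ($\to$l), ($\wedge$l$_1$), ($\wedge$l$_2$), ($\vee$l) may only be applied when the goal $\varphi$ of the conclusion is a propositional variable, a negation or a disjunction. $\mathbf{G3N}^{Hist}$ = positive history rules (ax)–($\vee$l) + (n$_1$)–(n$_4$); $\mathbf{G3NeF}^{Hist}$ = positive history rules + (n$_1$)–(n$_4$) + (nef); $\mathbf{G3CoPC}^{Hist}$ = positive history rules + (copc$_1$), (copc$_2$); $\mathbf{G3MPC}^{Hist}$ = positive history rules + (copc$_1$), (copc$_2$), (an). In both kinds of systems, a derivation is a finite tree of rule instances whose leaves are instances of (ax) or ($\top$). *)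

From Stdlib Require Import List Permutation.
Import ListNotations.

Inductive form : Type :=
| Var : nat -> form
| Top : form
| And : form -> form -> form
| Or  : form -> form -> form
| Imp : form -> form -> form
| Neg : form -> form.

Inductive logic : Type := LN | LNeF | LCoPC | LMPC.

Definition has_n (L : logic) : bool :=
  match L with LN | LNeF => true | _ => false end.
Definition has_nef (L : logic) : bool :=
  match L with LNeF => true | _ => false end.
Definition has_copc (L : logic) : bool :=
  match L with LCoPC | LMPC => true | _ => false end.
Definition has_an (L : logic) : bool :=
  match L with LMPC => true | _ => false end.

(* Multisets are lists; "Gamma, a" in a conclusion is any list that is a
   permutation of a :: Gamma. *)

Inductive G3 (L : logic) : list form -> form -> Prop :=
| g_ax : forall D G p, Permutation D (Var p :: G) -> G3 L D (Var p)
| g_top : forall D, G3 L D Top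
| g_impR : forall G a b, G3 L (a :: G) b -> G3 L G (Imp a b)
| g_impL : forall D G a b phi, Permutation D (Imp a b :: G) ->
    G3 L D a -> G3 L (b :: G) phi -> G3 L D phi
| g_andR : forall G a b, G3 L G a -> G3 L G b -> G3 L G (And a b)
| g_andL : forall D G a b phi, Permutation D (And a b :: G) ->
    G3 L (a :: b :: G) phi -> G3 L D phi
| g_orR1 : forall G a b, G3 L G a -> G3 L G (Or a b)
| g_orR2 : forall G a b, G3 L G b -> G3 L G (Or a b)
| g_orL : forall D G a b phi, Permutation D (Or a b :: G) ->
    G3 L (a :: G) phi -> G3 L (b :: G) phi -> G3 L D phi
| g_n : forall D G a b, has_n L = true -> Permutation D (Neg a :: G) ->
    G3 L (b :: D) a -> G3 L (a :: D) b -> G3 L D (Neg b)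
| g_nef : forall D G a b, has_nef L = true -> Permutation D (Neg a :: G) ->
    G3 L D a -> G3 L D (Neg b)
| g_copc : forall D G a b, has_copc L = true -> Permutation D (Neg a :: G) ->
    G3 L (b :: D) a -> G3 L D (Neg b)
| g_an : forall G a, has_an L = true -> G3 L (a :: G) (Neg a) -> G3 L G (Neg a).

Definition goal_ok (phi : form) : Prop :=
  match phi with Var _ | Neg _ | Or _ _ => True | _ => False end.

(* History systems G3L^Hist.  The history (a finite set) is represented by a
   list, read up to membership: (psi, H) is psi :: H, the empty history is []. *)
Inductive G3H (L : logic) : list form -> list form -> form -> Prop :=
| h_ax : forall H D G p, Permutation D (Var p :: G) -> G3H L H D (Var p)
| h_top : forall H D, G3H L H D Top
| h_impR1 : forall H G a b, ~ In a G -> G3H L [] (a :: G) b -> G3H L H G (Imp a b)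
| h_impR2 : forall H G a b, In a G -> G3H L H G b -> G3H L H G (Imp a b)
| h_impL : forall H D G a b phi, Permutation D (Imp a b :: G) -> goal_ok phi ->
    ~ In phi H -> ~ In b G ->
    G3H L (phi :: H) D a -> G3H L [] (b :: D) phi -> G3H L H D phi
| h_andR : forall H G a b, G3H L H G a -> G3H L H G b -> G3H L H G (And a b)
| h_andL1 : forall H D G a b phi, Permutation D (And a b :: G) -> goal_ok phi ->
    ~ In a G -> G3H L [] (a :: D) phi -> G3H L H D phi
| h_andL2 : forall H D G a b phi, Permutation D (And a b :: G) -> goal_ok phi ->
    ~ In b G -> G3H L [] (b :: D) phi -> G3H L H D phi
| h_orR1 : forall H G a b, G3H L H G a -> G3H L H G (Or a b)
| h_orR2 : forall H G a b, G3H L H G b -> G3H L H G (Or a b)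
| h_orL : forall H D G a b phi, Permutation D (Or a b :: G) -> goal_ok phi ->
    ~ In a G -> ~ In b G ->
    G3H L [] (a :: D) phi -> G3H L [] (b :: D) phi -> G3H L H D phi
| h_n1 : forall H D G a b, has_n L = true -> Permutation D (Neg a :: G) ->
    ~ In b (Neg a :: G) -> ~ In a G ->
    G3H L [] (b :: D) a -> G3H L [] (a :: D) b -> G3H L H D (Neg b)
| h_n2 : forall H D G a b, has_n L = true -> Permutation D (Neg a :: G) ->
    ~ In b (Neg a :: G) -> In a G ->
    G3H L [] (b :: D) a -> G3H L H D b -> G3H L H D (Neg b)
| h_n3 : forall H D G a b, has_n L = true -> Permutation D (Neg a :: G) ->
    ~ In (Neg b) H -> In b (Neg a :: G) -> ~ In a G ->
    G3H L (Neg b :: H) D a -> G3H L [] (a :: D) b -> G3H L H D (Neg b)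
| h_n4 : forall H D G a b, has_n L = true -> Permutation D (Neg a :: G) ->
    ~ In (Neg b) H -> In b (Neg a :: G) -> In a G ->
    G3H L (Neg b :: H) D a -> G3H L H D b -> G3H L H D (Neg b)
| h_nef : forall H D G a b, has_nef L = true -> Permutation D (Neg a :: G) ->
    ~ In (Neg b) H -> G3H L (Neg b :: H) D a -> G3H L H D (Neg b)
| h_copc1 : forall H D G a b, has_copc L = true -> Permutation D (Neg a :: G) ->
    ~ In b (Neg a :: G) -> G3H L [] (b :: D) a -> G3H L H D (Neg b)
| h_copc2 : forall H D G a b, has_copc L = true -> Permutation D (Neg a :: G) ->
    ~ In (Neg b) H -> In b (Neg a :: G) ->
    G3H L (Neg b :: H) D a -> G3H L H D (Neg b)
| h_an : forall H G a, has_an L = true -> ~ In a G ->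
    G3H L [] (a :: G) (Neg a) -> G3H L H G (Neg a).

From Stdlib Require Import List Permutation Lia Classical Wf_nat.
Import ListNotations.

(* By induction on history derivations we show that
   D => phi is G3-derivable from every context D0 that "covers" D, i.e. contains
   each formula of D either itself or decomposed by the G3 left rules.  This
   absorbs the difference between the cumulative history rules, which keep
   their principal formula, and the G3 rules, which consume it.

   We introduce a cumulative height-indexed
   calculus CumH (set-like contexts, left rules keeping the principal formula and
   restricted to variable/negation/disjunction goals).  G3 derivations embed
   into it once goals are unfolded by the right-invertible rules (CumR).  A
   derivation of least height is then turned into a history derivation by strong
   induction on the height: minimality guarantees that premises add new formulas
   and that the current goal may be pushed on the history, while the invariant
   "no history formula is derivable at the current height" gives the loop checks. *)

Lemma perm_split (x : form) D : In x D -> exists G, Permutation D (x :: G).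
Proof.
  intro Hx. destruct (in_split _ _ Hx) as [l1 [l2 ->]].
  exists (l1 ++ l2). apply Permutation_sym, Permutation_middle.
Qed.

Lemma perm_in_iff (x y : form) D G : Permutation D (x :: G) -> In y D <-> In y (x :: G).
Proof.
  intro P. split; intro Hy.
  - exact (Permutation_in _ P Hy).
  - exact (Permutation_in _ (Permutation_sym P) Hy).
Qed.

Lemma perm_in_hd (x : form) D G : Permutation D (x :: G) -> In x D.
Proof. intro P. apply (perm_in_iff x x D G P). left; reflexivity. Qed.

Lemma perm_incl_tl (x : form) D G : Permutation D (x :: G) -> incl G D.
Proof. intros P y Hy. apply (perm_in_iff x y D G P). right; exact Hy. Qed.

Lemma perm_notin (x y : form) D G : Permutation D (x :: G) -> ~ In y D -> ~ In y (x :: G).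
Proof. intros P Hy Hy'. apply Hy, (perm_in_iff x y D G P), Hy'. Qed.

Lemma perm_notin_tl (x y : form) D G : Permutation D (x :: G) -> ~ In y D -> ~ In y G.
Proof. intros P Hy Hy'. apply Hy, (perm_incl_tl x D G P), Hy'. Qed.

(* No formula is its own negation; this separates [a] from the principal [Neg a]. *)
Lemma neg_neq (a : form) : Neg a <> a.
Proof. induction a; try discriminate. intro E. injection E. exact IHa. Qed.

(* History rules keep the principal formula
   in the context, G3 rules consume it.  So a context D of a history derivation
   corresponds to G3 contexts D0 that contain every formula of D either literally
   or in decomposed form: [covered D0 x]. *)
Fixpoint covered (D0 : list form) (x : form) : Prop :=
  In x D0 \/
  match x with
  | And a b => covered D0 a /\ covered D0 b
  | Or a b => covered D0 a \/ covered D0 b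
  | Imp _ b => covered D0 b
  | _ => False
  end.

Definition covers (D0 D : list form) : Prop := forall x, In x D -> covered D0 x.

Lemma covered_in D0 x : In x D0 -> covered D0 x.
Proof. destruct x; simpl; auto. Qed.

Lemma covered_trans D0 D1 x : covered D0 x -> covers D1 D0 -> covered D1 x.
Proof.
  intros Hx H01. induction x; simpl in Hx; destruct Hx as [Hin | Hdec];
    try (apply H01; exact Hin); try contradiction; simpl; right; tauto.
Qed.

Lemma covers_refl D : covers D D.
Proof. intros x Hx. apply covered_in, Hx. Qed.

Lemma covers_incl D0 D D' : covers D0 D -> incl D' D -> covers D0 D'.
Proof. intros H Hi x Hx. apply H, Hi, Hx. Qed.

Lemma covers_extend D0 D a : covers D0 D -> covered D0 a -> covers D0 (a :: D).
Proof. intros H Ha x [<- | Hx]; auto. Qed.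

Lemma covers_cons D0 D a : covers D0 D -> covers (a :: D0) (a :: D).
Proof.
  intro H. apply covers_extend; [| apply covered_in; left; reflexivity].
  intros x Hx. apply (covered_trans D0); [apply H, Hx |].
  intros y Hy. apply covered_in. right; exact Hy.
Qed.

Lemma covers_decompose D0 D G0 E x :
  covers D0 D -> Permutation D0 (x :: G0) -> covered (E ++ G0) x -> covers (E ++ G0) D.
Proof.
  intros H0 P Hx y Hy. apply (covered_trans D0); [apply H0, Hy |].
  intros z Hz. apply (perm_in_iff x z D0 G0 P) in Hz.
  destruct Hz as [<- | Hz]; [exact Hx | apply covered_in, in_or_app; right; exact Hz].
Qed.

(* A negation is covered only by occurring itself, so the principal formula
   of a negation rule is available in every covering context. *)
Lemma covers_neg D0 D G a :
  covers D0 D -> Permutation D (Neg a :: G) -> exists G0, Permutation D0 (Neg a :: G0).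
Proof.
  intros H0 P. destruct (H0 _ (perm_in_hd _ _ _ P)) as [Hin | []].
  exact (perm_split _ _ Hin).
Qed.

Definition G3cov (L : logic) (D : list form) (phi : form) : Prop :=
  forall D0, covers D0 D -> G3 L D0 phi.

(* The cumulative left rules are admissible for G3cov: if the principal formula
   still occurs in D0 we apply the G3 rule, otherwise its components are
   already covered and the premise applies directly. *)
Lemma G3cov_andL L D a b c phi :
  In (And a b) D -> (c = a \/ c = b) -> G3cov L (c :: D) phi -> G3cov L D phi.
Proof.
  intros Hin Hc Hprem D0 H0.
  assert (Hcov : forall D1, covered D1 a -> covered D1 b -> covered D1 c)
    by (destruct Hc as [-> | ->]; auto).
  destruct (H0 _ Hin) as [Hin0 | [Ha Hb]].
  - destruct (perm_split _ _ Hin0) as [G0 P]. apply (g_andL L D0 G0 a b phi P).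
    apply Hprem, covers_extend.
    + apply (covers_decompose D0 D G0 [a; b] (And a b) H0 P).
      right; split; apply covered_in; simpl; auto.
    + apply Hcov; apply covered_in; simpl; auto.
  - apply Hprem, covers_extend; auto.
Qed.

Lemma G3cov_orL L D a b phi :
  In (Or a b) D -> G3cov L (a :: D) phi -> G3cov L (b :: D) phi -> G3cov L D phi.
Proof.
  intros Hin Ha Hb D0 H0. destruct (H0 _ Hin) as [Hin0 | [Hca | Hcb]].
  - destruct (perm_split _ _ Hin0) as [G0 P]. apply (g_orL L D0 G0 a b phi P).
    + apply Ha, covers_extend; [| apply covered_in; left; reflexivity].
      apply (covers_decompose D0 D G0 [a] (Or a b) H0 P).
      right; left; apply covered_in; left; reflexivity.
    + apply Hb, covers_extend; [| apply covered_in; left; reflexivity].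
      apply (covers_decompose D0 D G0 [b] (Or a b) H0 P).
      right; right; apply covered_in; left; reflexivity.
  - apply Ha, covers_extend; assumption.
  - apply Hb, covers_extend; assumption.
Qed.

Lemma G3cov_impL L D a b phi :
  In (Imp a b) D -> G3cov L D a -> G3cov L (b :: D) phi -> G3cov L D phi.
Proof.
  intros Hin Ha Hb D0 H0. destruct (H0 _ Hin) as [Hin0 | Hcb].
  - destruct (perm_split _ _ Hin0) as [G0 P]. apply (g_impL L D0 G0 a b phi P).
    + apply Ha, H0.
    + apply Hb, covers_extend; [| apply covered_in; left; reflexivity].
      apply (covers_decompose D0 D G0 [b] (Imp a b) H0 P).
      right; apply covered_in; left; reflexivity.
  - apply Hb, covers_extend; assumption.
Qed.

Lemma G3cov_cons L D D' D0 a phi :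
  G3cov L D' phi -> incl D' (a :: D) -> covers D0 D -> G3 L (a :: D0) phi.
Proof. intros H Hi H0. apply H. exact (covers_incl _ _ _ (covers_cons _ _ _ H0) Hi). Qed.

Local Hint Resolve incl_refl incl_tl perm_in_hd G3cov_cons : core.

Lemma hist_sound L H D phi : G3H L H D phi -> G3cov L D phi.
Proof.
  induction 1; intros D0 HC.
  - destruct (HC _ (perm_in_hd _ _ _ H0)) as [Hin | []].
    destruct (perm_split _ _ Hin) as [G0 P]. exact (g_ax L D0 G0 p P).
  - apply g_top.
  - apply g_impR; eauto.
  - apply g_impR; eauto.
  - eapply G3cov_impL; eauto.
  - apply g_andR; auto.
  - apply (G3cov_andL L D a b a phi); eauto.
  - apply (G3cov_andL L D a b b phi); eauto.
  - apply g_orR1; auto.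
  - apply g_orR2; auto.
  - eapply G3cov_orL; eauto.
  - destruct (covers_neg _ _ _ _ HC H1) as [G0 P]. apply (g_n L D0 G0 a b H0 P); eauto.
  - destruct (covers_neg _ _ _ _ HC H1) as [G0 P]. apply (g_n L D0 G0 a b H0 P); eauto.
  - destruct (covers_neg _ _ _ _ HC H1) as [G0 P]. apply (g_n L D0 G0 a b H0 P); eauto.
  - destruct (covers_neg _ _ _ _ HC H1) as [G0 P]. apply (g_n L D0 G0 a b H0 P); eauto.
  - destruct (covers_neg _ _ _ _ HC H1) as [G0 P]. apply (g_nef L D0 G0 a b H0 P); auto.
  - destruct (covers_neg _ _ _ _ HC H1) as [G0 P]. apply (g_copc L D0 G0 a b H0 P); eauto.
  - destruct (covers_neg _ _ _ _ HC H1) as [G0 P]. apply (g_copc L D0 G0 a b H0 P); eauto.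
  - apply g_an; eauto.
Qed.

(* We pass through the cumulative calculus [CumH L n]: contexts
   are read as sets, left rules keep their principal formula and are restricted
   to goals allowed in the history calculus, and [n] bounds the height.  It is
   the history calculus without the loop checks; minimal-height derivations in
   it satisfy all the side conditions of the history rules. *)
Inductive CumH (L : logic) : nat -> list form -> form -> Prop :=
| c_ax n D p : In (Var p) D -> CumH L (S n) D (Var p)
| c_top n D : CumH L (S n) D Top
| c_impR n D a b : CumH L n (a :: D) b -> CumH L (S n) D (Imp a b)
| c_impL n D a b phi : In (Imp a b) D -> goal_ok phi ->
    CumH L n D a -> CumH L n (b :: D) phi -> CumH L (S n) D phi
| c_andR n D a b : CumH L n D a -> CumH L n D b -> CumH L (S n) D (And a b)
| c_andL1 n D a b phi : In (And a b) D -> goal_ok phi ->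
    CumH L n (a :: D) phi -> CumH L (S n) D phi
| c_andL2 n D a b phi : In (And a b) D -> goal_ok phi ->
    CumH L n (b :: D) phi -> CumH L (S n) D phi
| c_orR1 n D a b : CumH L n D a -> CumH L (S n) D (Or a b)
| c_orR2 n D a b : CumH L n D b -> CumH L (S n) D (Or a b)
| c_orL n D a b phi : In (Or a b) D -> goal_ok phi ->
    CumH L n (a :: D) phi -> CumH L n (b :: D) phi -> CumH L (S n) D phi
| c_n n D a b : has_n L = true -> In (Neg a) D ->
    CumH L n (b :: D) a -> CumH L n (a :: D) b -> CumH L (S n) D (Neg b)
| c_nef n D a b : has_nef L = true -> In (Neg a) D ->
    CumH L n D a -> CumH L (S n) D (Neg b)
| c_copc n D a b : has_copc L = true -> In (Neg a) D ->
    CumH L n (b :: D) a -> CumH L (S n) D (Neg b)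
| c_an n D a : has_an L = true -> CumH L n (a :: D) (Neg a) -> CumH L (S n) D (Neg a).

Local Hint Constructors CumH : core.

Lemma incl_cons_both (a : form) D D' : incl D D' -> incl (a :: D) (a :: D').
Proof. intros H x [<- | Hx]; [left | right; apply H]; auto. Qed.

Local Hint Resolve incl_cons_both : core.

Lemma CumH_weaken L n D phi : CumH L n D phi -> forall D', incl D D' -> CumH L n D' phi.
Proof. induction 1; intros D' Hi; eauto;
  [eapply c_impL | eapply c_orL | eapply c_n]; eauto.
Qed.

Lemma CumH_raise L n D phi : CumH L n D phi -> forall m, n <= m -> CumH L m D phi.
Proof.
  induction 1; intros m Hm; destruct m as [| m]; try lia; eauto with arith.
Qed.

Definition Cum (L : logic) (D : list form) (phi : form) : Prop := exists n, CumH L n D phi.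

Lemma Cum_weaken L D D' phi : Cum L D phi -> incl D D' -> Cum L D' phi.
Proof. intros [n H] Hi. exists n. exact (CumH_weaken L n D phi H D' Hi). Qed.

Lemma Cum_common_height L D1 D2 x y :
  Cum L D1 x -> Cum L D2 y -> exists n, CumH L n D1 x /\ CumH L n D2 y.
Proof.
  intros [n1 H1] [n2 H2]. exists (max n1 n2).
  split; eapply CumH_raise; eauto; lia.
Qed.

Lemma Cum_unary L D D' phi psi :
  (forall n, CumH L n D' psi -> CumH L (S n) D phi) -> Cum L D' psi -> Cum L D phi.
Proof. intros Hrule [n H]. exists (S n). exact (Hrule n H). Qed.

Lemma Cum_binary L D D1 D2 phi psi1 psi2 :
  (forall n, CumH L n D1 psi1 -> CumH L n D2 psi2 -> CumH L (S n) D phi) ->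
  Cum L D1 psi1 -> Cum L D2 psi2 -> Cum L D phi.
Proof.
  intros Hrule H1 H2. destruct (Cum_common_height L D1 D2 psi1 psi2 H1 H2) as [n [K1 K2]].
  exists (S n). exact (Hrule n K1 K2).
Qed.

(* Goal unfolding: [CumR] decomposes the goals Top, And and Imp, for which the
   cumulative calculus has no left rules, into their right-rule premises. *)
Fixpoint CumR (L : logic) (D : list form) (phi : form) : Prop :=
  match phi with
  | Top => True
  | And x y => CumR L D x /\ CumR L D y
  | Imp x y => CumR L (x :: D) y
  | _ => Cum L D phi
  end.

Lemma CumR_weaken L phi : forall D D', incl D D' -> CumR L D phi -> CumR L D' phi.
Proof.
  induction phi; intros D D' Hi H; simpl in *;
    try (eapply Cum_weaken; eassumption).
  - exact I.
  - destruct H; split; eauto.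
  - eauto.
Qed.

Lemma CumR_Cum L phi : forall D, CumR L D phi -> Cum L D phi.
Proof.
  induction phi; intros D H; simpl in H; auto.
  - exists 1. constructor.
  - destruct H. eapply Cum_binary; eauto.
  - eapply Cum_unary; eauto.
Qed.

(* A left rule available in [Cum] for the restricted goals lifts to all goals
   of [CumR], by induction on the goal.  [ok] collects the side conditions of the
   rule, [ext] lists the formulas added in each premise. *)
Lemma CumR_left_rule L (ok : list form -> Prop) (ext : list (list form)) :
  (forall D D', incl D D' -> ok D -> ok D') ->
  (forall D phi, goal_ok phi -> ok D -> (forall E, In E ext -> Cum L (E ++ D) phi) ->
     Cum L D phi) ->
  forall phi D, ok D -> (forall E, In E ext -> CumR L (E ++ D) phi) -> CumR L D phi.
Proof.
  intros ok_mono rule phi. induction phi; intros D Hok Hprem; simpl in *;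
    try (apply rule; simpl; auto; fail).
  - exact I.
  - split; [apply IHphi1 | apply IHphi2]; auto; intros E HE; apply Hprem, HE.
  - apply IHphi2; [apply (ok_mono D); auto; apply incl_tl, incl_refl |].
    intros E HE. apply (CumR_weaken L phi2 (phi1 :: E ++ D)); [| apply Hprem, HE].
    intros x Hx. exact (Permutation_in _ (Permutation_middle E D phi1) Hx).
Qed.

Lemma CumR_impL L D a b phi :
  In (Imp a b) D -> Cum L D a -> CumR L (b :: D) phi -> CumR L D phi.
Proof.
  intros Hin Ha Hb.
  apply (CumR_left_rule L (fun D => In (Imp a b) D /\ Cum L D a) [[b]]);
    [| | split; assumption | intros E [<- | []]; exact Hb].
  - intros D1 D2 Hi [Hin1 Ha1]. split; [apply Hi, Hin1 | exact (Cum_weaken L D1 D2 a Ha1 Hi)].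
  - intros D1 psi Hok [Hin1 Ha1] Hprem.
    apply (Cum_binary L D1 D1 (b :: D1) psi a psi); eauto.
    apply (Hprem [b]). left; reflexivity.
Qed.

Lemma CumR_andL L D a b phi :
  In (And a b) D -> CumR L (a :: b :: D) phi -> CumR L D phi.
Proof.
  intros Hin Hab.
  apply (CumR_left_rule L (fun D => In (And a b) D) [[a; b]]);
    [intros D1 D2 Hi; apply Hi | | exact Hin | intros E [<- | []]; exact Hab].
  intros D1 psi Hok Hin1 Hprem. destruct (Hprem [a; b] (or_introl eq_refl)) as [n Hn].
  exists (S (S n)). apply (c_andL2 L (S n) D1 a b psi Hin1 Hok).
  apply (c_andL1 L n (b :: D1) a b psi (or_intror Hin1) Hok).
  exact Hn.
Qed.

Lemma CumR_orL L D a b phi :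
  In (Or a b) D -> CumR L (a :: D) phi -> CumR L (b :: D) phi -> CumR L D phi.
Proof.
  intros Hin Ha Hb.
  apply (CumR_left_rule L (fun D => In (Or a b) D) [[a]; [b]]);
    [intros D1 D2 Hi; apply Hi | | exact Hin | intros E [<- | [<- | []]]; assumption].
  intros D1 psi Hok Hin1 Hprem.
  apply (Cum_binary L D1 (a :: D1) (b :: D1) psi psi psi); eauto.
  - apply (Hprem [a]). left; reflexivity.
  - apply (Hprem [b]). right; left; reflexivity.
Qed.

Lemma perm_principal_incl (x : form) D G D' :
  Permutation D (x :: G) -> incl D D' -> In x D' /\ incl G D'.
Proof.
  intros P Hi. split; [apply Hi; exact (perm_in_hd _ _ _ P) |].
  exact (incl_tran (perm_incl_tl _ _ _ P) Hi).
Qed.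

Lemma g3_to_CumR L D phi : G3 L D phi -> forall D', incl D D' -> CumR L D' phi.
Proof.
  induction 1; intros D' Hi.
  - exists 1. constructor. apply Hi. exact (perm_in_hd _ _ _ H).
  - exact I.
  - simpl. auto.
  - destruct (perm_principal_incl _ _ _ _ H Hi) as [Hx HG].
    apply (CumR_impL L D' a b phi Hx); [apply CumR_Cum |]; auto.
  - simpl; auto.
  - destruct (perm_principal_incl _ _ _ _ H Hi) as [Hx HG].
    apply (CumR_andL L D' a b phi Hx). auto.
  - apply (Cum_unary L D' D' (Or a b) a); eauto using CumR_Cum.
  - apply (Cum_unary L D' D' (Or a b) b); eauto using CumR_Cum.
  - destruct (perm_principal_incl _ _ _ _ H Hi) as [Hx HG].
    apply (CumR_orL L D' a b phi Hx); auto.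
  - destruct (perm_principal_incl _ _ _ _ H0 Hi) as [Hx _].
    apply (Cum_binary L D' (b :: D') (a :: D') (Neg b) a b); eauto using CumR_Cum.
  - destruct (perm_principal_incl _ _ _ _ H0 Hi) as [Hx _].
    apply (Cum_unary L D' D' (Neg b) a); eauto using CumR_Cum.
  - destruct (perm_principal_incl _ _ _ _ H0 Hi) as [Hx _].
    apply (Cum_unary L D' (b :: D') (Neg b) a); eauto using CumR_Cum.
  - apply (Cum_unary L D' (a :: D') (Neg a) (Neg a)); [eauto |].
    exact (IHG3 (a :: D') (incl_cons_both _ _ _ Hi)).
Qed.

Lemma CumH_absorb L n D x phi : CumH L n (x :: D) phi -> In x D -> CumH L n D phi.
Proof. intros H Hx. apply (CumH_weaken L n (x :: D) phi H). intros y [<- | Hy]; assumption. Qed.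

(* The history invariant of the translation: no formula of the history is
   derivable from D within height n.  It ensures the loop-check side conditions. *)
Definition fresh_history (L : logic) (n : nat) (D Hs : list form) : Prop :=
  forall psi, In psi Hs -> ~ CumH L n D psi.

Lemma fresh_lower L n D Hs : fresh_history L (S n) D Hs -> fresh_history L n D Hs.
Proof. intros H psi Hpsi Hd. apply (H psi Hpsi). eapply CumH_raise; eauto. Qed.

Lemma least_height L n D phi : CumH L n D phi ->
  exists m, m <= n /\ CumH L m D phi /\ forall m', m' < m -> ~ CumH L m' D phi.
Proof.
  intro Hn.
  destruct (dec_inh_nat_subset_has_unique_least_element (fun m => CumH L m D phi)
              (fun m => classic _) (ex_intro _ n Hn)) as [m [[Hm Hleast] _]].
  exists m. split; [exact (Hleast n Hn) | split; [exact Hm |]].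
  intros m' Hlt Hm'. specialize (Hleast m' Hm'). lia.
Qed.

Section LastRule.

Variables (L : logic) (k : nat).

Hypothesis IH : forall D g Hs, CumH L k D g -> fresh_history L k D Hs -> G3H L Hs D g.

(* The three ways premises are translated: with the history reset, kept,
   or extended by the current goal (which needs height S k exactly). *)
Lemma hist_reset D g : CumH L k D g -> G3H L [] D g.
Proof. intro H. apply IH; [exact H | intros psi []]. Qed.

Lemma hist_keep D Hs g : fresh_history L (S k) D Hs -> CumH L k D g -> G3H L Hs D g.
Proof. intros Hfr H. apply IH; [exact H | exact (fresh_lower L k D Hs Hfr)]. Qed.

Lemma hist_push D Hs phi g :
  ~ CumH L k D phi -> fresh_history L (S k) D Hs -> CumH L k D g -> G3H L (phi :: Hs) D g.
Proof.
  intros Hlow Hfr H. apply IH; [exact H |].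
  intros psi [<- | Hpsi]; [exact Hlow | exact (fresh_lower L k D Hs Hfr psi Hpsi)].
Qed.

Lemma new_formula D x phi : ~ CumH L k D phi -> CumH L k (x :: D) phi -> ~ In x D.
Proof. intros Hlow H Hx. exact (Hlow (CumH_absorb L k D x phi H Hx)). Qed.

Lemma hist_n D Hs a b :
  ~ CumH L k D (Neg b) -> fresh_history L (S k) D Hs -> ~ In (Neg b) Hs ->
  has_n L = true -> In (Neg a) D -> CumH L k (b :: D) a -> CumH L k (a :: D) b ->
  G3H L Hs D (Neg b).
Proof.
  intros Hlow Hfr Hnotin Hn Hin Ha Hb. destruct (perm_split _ _ Hin) as [G P].
  assert (a_in_G : In a D -> In a G).
  { intro HaD. apply (perm_in_iff _ _ _ _ P) in HaD.
    destruct HaD as [E | HaG]; [exfalso; exact (neg_neq a E) | exact HaG]. }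
  destruct (classic (In b D)) as [HbD | HbD]; destruct (classic (In a D)) as [HaD | HaD].
  - apply (h_n4 L Hs D G a b Hn P Hnotin (proj1 (perm_in_iff _ _ _ _ P) HbD) (a_in_G HaD)).
    + exact (hist_push D Hs (Neg b) a Hlow Hfr (CumH_absorb _ _ _ _ _ Ha HbD)).
    + exact (hist_keep D Hs b Hfr (CumH_absorb _ _ _ _ _ Hb HaD)).
  - apply (h_n3 L Hs D G a b Hn P Hnotin (proj1 (perm_in_iff _ _ _ _ P) HbD)
             (perm_notin_tl _ _ _ _ P HaD)).
    + exact (hist_push D Hs (Neg b) a Hlow Hfr (CumH_absorb _ _ _ _ _ Ha HbD)).
    + exact (hist_reset _ _ Hb).
  - apply (h_n2 L Hs D G a b Hn P (perm_notin _ _ _ _ P HbD) (a_in_G HaD)).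
    + exact (hist_reset _ _ Ha).
    + exact (hist_keep D Hs b Hfr (CumH_absorb _ _ _ _ _ Hb HaD)).
  - apply (h_n1 L Hs D G a b Hn P (perm_notin _ _ _ _ P HbD) (perm_notin_tl _ _ _ _ P HaD));
      apply hist_reset; assumption.
Qed.

Lemma hist_copc D Hs a b :
  ~ CumH L k D (Neg b) -> fresh_history L (S k) D Hs -> ~ In (Neg b) Hs ->
  has_copc L = true -> In (Neg a) D -> CumH L k (b :: D) a -> G3H L Hs D (Neg b).
Proof.
  intros Hlow Hfr Hnotin Hc Hin Ha. destruct (perm_split _ _ Hin) as [G P].
  destruct (classic (In b D)) as [HbD | HbD].
  - apply (h_copc2 L Hs D G a b Hc P Hnotin); [apply (perm_in_iff _ _ _ _ P), HbD |].
    exact (hist_push D Hs (Neg b) a Hlow Hfr (CumH_absorb _ _ _ _ _ Ha HbD)).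
  - apply (h_copc1 L Hs D G a b Hc P (perm_notin _ _ _ _ P HbD)).
    exact (hist_reset _ _ Ha).
Qed.

Lemma hist_last_rule D phi Hs :
  CumH L (S k) D phi -> ~ CumH L k D phi -> fresh_history L (S k) D Hs -> G3H L Hs D phi.
Proof.
  intros Hd Hlow Hfr.
  assert (Hnotin : ~ In phi Hs) by exact (fun Hin => Hfr phi Hin Hd).
  inversion Hd; subst.
  - destruct (perm_split _ _ H0) as [G P]. exact (h_ax L Hs D G p P).
  - apply h_top.
  - destruct (classic (In a D)) as [HaD | HaD].
    + exact (h_impR2 L Hs D a b HaD (hist_keep D Hs b Hfr (CumH_absorb _ _ _ _ _ H0 HaD))).
    + exact (h_impR1 L Hs D a b HaD (hist_reset _ _ H0)).
  - destruct (perm_split _ _ H0) as [G P].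
    apply (h_impL L Hs D G a b phi P H1 Hnotin
             (perm_notin_tl _ _ _ _ P (new_formula D b phi Hlow H3))).
    + exact (hist_push D Hs phi a Hlow Hfr H2).
    + exact (hist_reset _ _ H3).
  - apply h_andR; apply hist_keep; assumption.
  - destruct (perm_split _ _ H0) as [G P].
    apply (h_andL1 L Hs D G a b phi P H1 (perm_notin_tl _ _ _ _ P (new_formula D a phi Hlow H2))).
    exact (hist_reset _ _ H2).
  - destruct (perm_split _ _ H0) as [G P].
    apply (h_andL2 L Hs D G a b phi P H1 (perm_notin_tl _ _ _ _ P (new_formula D b phi Hlow H2))).
    exact (hist_reset _ _ H2).
  - apply h_orR1; apply hist_keep; assumption.
  - apply h_orR2; apply hist_keep; assumption.
  - destruct (perm_split _ _ H0) as [G P].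
    apply (h_orL L Hs D G a b phi P H1 (perm_notin_tl _ _ _ _ P (new_formula D a phi Hlow H2))
             (perm_notin_tl _ _ _ _ P (new_formula D b phi Hlow H3))); apply hist_reset; assumption.
  - exact (hist_n D Hs a b Hlow Hfr Hnotin H0 H1 H2 H3).
  - destruct (perm_split _ _ H1) as [G P].
    exact (h_nef L Hs D G a b H0 P Hnotin (hist_push D Hs (Neg b) a Hlow Hfr H2)).
  - exact (hist_copc D Hs a b Hlow Hfr Hnotin H0 H1 H2).
  - exact (h_an L Hs D a H0 (new_formula D a (Neg a) Hlow H1) (hist_reset _ _ H1)).
Qed.

End LastRule.

Lemma least_to_hist L n : forall D phi Hs,
  CumH L n D phi -> (forall m, m < n -> ~ CumH L m D phi) -> fresh_history L n D Hs ->
  G3H L Hs D phi.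
Proof.
  induction n as [n IH] using lt_wf_ind. intros D phi Hs Hd Hleast Hfr.
  destruct n as [| k]; [inversion Hd |].
  apply (hist_last_rule L k); [| exact Hd | apply Hleast; lia | exact Hfr].
  intros D' g Hs' Hg Hfr'.
  destruct (least_height L k D' g Hg) as [m [Hmk [Hm Hmin]]].
  apply (IH m); [lia | exact Hm | exact Hmin |].
  intros psi Hpsi Hpsi_m. apply (Hfr' psi Hpsi). exact (CumH_raise L m D' psi Hpsi_m k Hmk).
Qed.

Lemma Cum_to_hist L D phi : Cum L D phi -> G3H L [] D phi.
Proof.
  intros [n Hn]. destruct (least_height L n D phi Hn) as [m [_ [Hm Hmin]]].
  apply (least_to_hist L m D phi [] Hm Hmin). intros psi [].
Qed.

Theorem theorem5p4 (L : logic) (Gamma : list form) (phi : form) :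
  G3 L Gamma phi <-> G3H L [] Gamma phi.
Proof.
  split; intro H.
  - apply Cum_to_hist, CumR_Cum. exact (g3_to_CumR L Gamma phi H Gamma (incl_refl Gamma)).
  - exact (hist_sound L [] Gamma phi H Gamma (covers_refl Gamma)).
Qed.
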